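(* Suppose Assumption 1 holds and let $0<\delta<1$. Let $J\subseteq\{1,\dots,q\}$ with $|J|\le q^*$ and $J_0\setminus J\neq\emptyset$, and let $v=\sum_{j\in J_0}v_j$ with $v_j\in V_j$ for $j\in J_0$. On the event $\mathcal E_{\delta,J\cup J_0}$, $$\|\hat\Pi_{J_0}v\|_n^2-\|\hat\Pi_Jv\|_n^2=\|v-\hat\Pi_Jv\|_n^2\ge\frac{1-\delta}{1+\delta}(1-\rho_{q^*}^2)\Big\|\sum_{j\in J_0\setminus J}v_j\Big\|_n^2.$$
   Context: Let $q\ge1$ and let $(Y,X)$ be a pair of random variables with $X=(X_1,\dots,X_q)^T$, each $X_j$ real-valued, and $Y=\sum_{j=1}^q f_j(X_j)+\epsilon$, where $f_j\in L^2(\mathbb P^{X_j})$, $\mathbb E[f_j(X_j)]=0$ for $j=1,\dots,q-1$, and $\epsilon$ is a centered Gaussian variable with variance $\sigma^2$, independent of $X$. The space $L^2(\mathbb P^X)$ carries the inner product $\langle g,h\rangle=\mathbb E[g(X)h(X)]$ and norm $\|g\|=\langle g,g\rangle^{1/2}$. Let $H_q=L^2(\mathbb P^{X_q})$ and $H_j=\{h\in L^2(\mathbb P^{X_j}):\mathbb E[h(X_j)]=0\}$ for $j<q$, viewed as subspaces of $L^2(\mathbb P^X)$ via $x\mapsto h(x_j)$; for $J\subseteq\{1,\dots,q\}$ let $H_J=\sum_{j\in J}H_j$ (with $H_\emptyset=\{0\}$). Let $J_0=\{j:\|f_j\|>0\}$, $s=|J_0|$, and let $q^*$ be an integer with $s\le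 q^*$. Let $\rho_{q^*}$ be the supremum of $\langle h_1,h_2\rangle/(\|h_1\|\|h_2\|)$ over all nonzero $h_1\in H_{J_1}$, $h_2\in H_{J_2}$ and all $J_1,J_2\subseteq\{1,\dots,q\}$ with $J_1\cap J_2=\emptyset$ and $|J_1|,|J_2|\le q^*$. Assumption 1 is the condition $\rho_{q^*}<1$. For each $j$, $V_j\subseteq H_j$ is a finite-dimensional linear subspace and $V_J=\sum_{j\in J}V_j$. $X^1,\dots,X^n$ are independent copies of $X$. The empirical norm is $\|h\|_n^2=\frac1n\sum_{i=1}^nh(X^i)^2$ for functions and $\|u\|_n^2=\frac1n\|u\|_2^2$ for $u\in\mathbb R^n$. $\hat\Pi_J$ is the orthogonal projection of $\mathbb R^n$ onto $\{(g(X^1),\dots,g(X^n))^T:g\in V_J\}$, and for a function $h$ we write $\hat\Pi_Jh=\hat\Pi_J(h(X^1),\dots,h(X^n))^T$. For $0<\delta<1$ and $J\subseteq\{1,\dots,q\}$, $\mathcal E_{\delta,J}$ is the event that $(1-\delta)\|g\|^2\le\|g\|_n^2\le(1+\delta)\|g\|^2$ for all $g\in V_J$. *)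

From Stdlib Require Import Reals Lra List ClassicalEpsilon.
Import ListNotations.
Open Scope R_scope.

(* A point x = (x_0, ..., x_{q-1}) of R^q (coordinates are indexed 0..q-1;
   coordinates >= q are irrelevant). Index j here corresponds to j+1 in the paper. *)
Definition Pt := nat -> R.
Definition Fn := Pt -> R.

Definition sumR (l : list nat) (f : nat -> R) : R :=
  fold_right (fun j acc => f j + acc) 0 l.

Definition fsum (J : list nat) (hs : nat -> Fn) : Fn :=
  fun x => sumR J (fun j => hs j x).

Definition idx_set (q : nat) (J : list nat) : Prop :=
  NoDup J /\ forall j, In j J -> (j < q)%nat.

Definition setdiff (J1 J2 : list nat) : list nat :=
  filter (fun j => negb (existsb (Nat.eqb j) J2)) J1.

Definition HJ (H : nat -> Fn -> Prop) (J : list nat) (h : Fn) : Prop :=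
  exists hs : nat -> Fn, (forall j, In j J -> H j (hs j)) /\
                         forall x, h x = fsum J hs x.

Definition subspace (S : Fn -> Prop) : Prop :=
  S (fun _ => 0) /\
  (forall g h, S g -> S h -> S (fun x => g x + h x)) /\
  (forall (a : R) g, S g -> S (fun x => a * g x)).

Definition fin_dim (S : Fn -> Prop) : Prop :=
  exists B : list Fn, (forall b, In b B -> S b) /\
    forall g, S g -> exists c : nat -> R, forall x,
      g x = sumR (seq 0 (length B)) (fun k => c k * nth k B (fun _ => 0) x).

(* ip is a symmetric, bilinear, positive semidefinite form on A
   (the abstract population inner product <g,h> = E[g(X) h(X)]) *)
Definition inner_on (A : Fn -> Prop) (ip : Fn -> Fn -> R) : Prop :=
  (forall g h, A g -> A h -> ip g h = ip h g) /\
  (forall g h k, A g -> A h -> A k ->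
     ip (fun x => g x + h x) k = ip g k + ip h k) /\
  (forall (a : R) g h, A g -> A h -> ip (fun x => a * g x) h = a * ip g h) /\
  (forall g, A g -> 0 <= ip g g).

(* the set of correlations whose supremum is rho_{q*} *)
Definition corr_set (q qstar : nat) (H : nat -> Fn -> Prop) (ip : Fn -> Fn -> R)
  : R -> Prop := fun r =>
  exists J1 J2 h1 h2,
    idx_set q J1 /\ idx_set q J2 /\ (forall j, In j J1 -> ~ In j J2) /\
    (length J1 <= qstar)%nat /\ (length J2 <= qstar)%nat /\
    HJ H J1 h1 /\ HJ H J2 h2 /\ 0 < ip h1 h1 /\ 0 < ip h2 h2 /\
    r = ip h1 h2 / (sqrt (ip h1 h1) * sqrt (ip h2 h2)).

Definition J0set (q : nat) (ip : Fn -> Fn -> R) (f : nat -> Fn) : list nat :=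
  filter (fun j => if Rlt_dec 0 (ip (f j) (f j)) then true else false) (seq 0 q).

(* empirical norms; samples X^1..X^n are xs 0 .. xs (n-1); vectors of R^n are
   nat -> R with only indices < n relevant *)
Definition emp_norm2_fn (n : nat) (xs : nat -> Pt) (g : Fn) : R :=
  / INR n * sumR (seq 0 n) (fun i => (g (xs i)) ^ 2).
Definition emp_norm2_vec (n : nat) (u : nat -> R) : R :=
  / INR n * sumR (seq 0 n) (fun i => (u i) ^ 2).

Definition eval_vec (xs : nat -> Pt) (g : Fn) : nat -> R := fun i => g (xs i).

Definition SJ (n : nat) (xs : nat -> Pt) (V : nat -> Fn -> Prop) (J : list nat)
  (w : nat -> R) : Prop :=
  exists g, HJ V J g /\ forall i, (i < n)%nat -> w i = g (xs i).

Definition is_orth_proj (n : nat) (S : (nat -> R) -> Prop) (u p : nat -> R) : Prop :=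
  S p /\ forall w, S w -> sumR (seq 0 n) (fun i => (u i - p i) * w i) = 0.

(* orthogonal projection of R^n onto S (chosen by epsilon; it exists and is unique
   on the coordinates < n for the linear subspaces used below) *)
Definition proj (n : nat) (S : (nat -> R) -> Prop) (u : nat -> R) : nat -> R :=
  epsilon (inhabits (fun _ : nat => 0)) (fun p => is_orth_proj n S u p).

Definition PiHat (n : nat) (xs : nat -> Pt) (V : nat -> Fn -> Prop) (J : list nat)
  (u : nat -> R) : nat -> R := proj n (SJ n xs V J) u.

Definition event (n : nat) (xs : nat -> Pt) (ip : Fn -> Fn -> R)
  (V : nat -> Fn -> Prop) (J : list nat) (delta : R) : Prop :=
  forall g, HJ V J g ->
    (1 - delta) * ip g g <= emp_norm2_fn n xs g /\
    emp_norm2_fn n xs g <= (1 + delta) * ip g g.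

(* The identity is Pythagoras: [v] lies in [V_{J0}], so its projection onto the sample
   space of [V_{J0}] is [v] itself.  For the bound, write the
   projection onto [V_J] as the evaluation of some [g] in [V_J]; then [v - g = w - u] with
   [w = sum_{j in J0 \ J} v_j] and [u] in [V_J].  Both lie in [V_{J u J0}], so on the event
   the empirical norms are within [1 -+ delta] of the population norms, and since
   [J0 \ J] and [J] are disjoint of size at most [q*], the correlation bound gives
   [||w - u||^2 >= ||w||^2 - 2 rho ||w|| ||u|| + ||u||^2 >= (1 - rho^2) ||w||^2]. *)
From Stdlib Require Import Reals List Lra Lia Psatz Classical FunctionalExtensionality
  ClassicalEpsilon Permutation.
Open Scope R_scope.

Notation memb j l := (existsb (Nat.eqb j) l).

Lemma memb_In j l : memb j l = true <-> In j l.
Proof.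
  rewrite existsb_exists; split.
  - intros [x [Hx E]]; apply Nat.eqb_eq in E; subst; auto.
  - intros H; exists j; split; auto; apply Nat.eqb_refl.
Qed.

Lemma memb_notIn j l : memb j l = false <-> ~ In j l.
Proof. rewrite <- memb_In; destruct (memb j l); intuition congruence. Qed.

Lemma sumR_cons a l f : sumR (a :: l) f = f a + sumR l f.
Proof. reflexivity. Qed.

Lemma sumR_ext l f g : (forall j, In j l -> f j = g j) -> sumR l f = sumR l g.
Proof.
  induction l as [|a l IH]; intros H; [reflexivity|].
  rewrite !sumR_cons, (H a (or_introl eq_refl)), IH; [reflexivity|].
  intros j Hj; apply H; right; exact Hj.
Qed.

Lemma sumR_0 l : sumR l (fun _ => 0) = 0.
Proof. induction l as [|a l IH]; [reflexivity|]. rewrite sumR_cons, IH; ring. Qed.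

Lemma sumR_plus l f g : sumR l (fun i => f i + g i) = sumR l f + sumR l g.
Proof. induction l as [|a l IH]; [simpl; ring|]. rewrite !sumR_cons, IH; ring. Qed.

Lemma sumR_minus l f g : sumR l (fun i => f i - g i) = sumR l f - sumR l g.
Proof. induction l as [|a l IH]; [simpl; ring|]. rewrite !sumR_cons, IH; ring. Qed.

Lemma sumR_scal l a f : sumR l (fun i => a * f i) = a * sumR l f.
Proof. induction l as [|b l IH]; [simpl; ring|]. rewrite !sumR_cons, IH; ring. Qed.

Lemma sumR_app l1 l2 f : sumR (l1 ++ l2) f = sumR l1 f + sumR l2 f.
Proof. induction l1 as [|a l IH]; [simpl; ring|]. simpl app; rewrite !sumR_cons, IH; ring. Qed.

Lemma sumR_filter p l f : sumR (filter p l) f = sumR l (fun j => if p j then f j else 0).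
Proof.
  induction l as [|a l IH]; [reflexivity|]. cbn [filter].
  destruct (p a) eqn:E; rewrite ?sumR_cons, IH, E; ring.
Qed.

Lemma sumR_split_filter p l f :
  sumR l f = sumR (filter p l) f + sumR (filter (fun j => negb (p j)) l) f.
Proof.
  rewrite !sumR_filter, <- sumR_plus. apply sumR_ext; intros j _.
  destruct (p j); simpl; ring.
Qed.

Lemma sumR_perm l l' f : Permutation l l' -> sumR l f = sumR l' f.
Proof. induction 1; rewrite ?sumR_cons; lra. Qed.

Lemma sumR_swap A B f : NoDup A -> NoDup B ->
  sumR A (fun j => if memb j B then f j else 0) = sumR B (fun j => if memb j A then f j else 0).
Proof.
  intros HA HB. rewrite <- !sumR_filter. apply sumR_perm.
  apply NoDup_Permutation; try apply NoDup_filter; auto.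
  intros x; rewrite !filter_In, !memb_In; tauto.
Qed.

Lemma sumR_nonneg l f : (forall i, In i l -> 0 <= f i) -> 0 <= sumR l f.
Proof.
  induction l as [|a l IH]; intros H; [simpl; lra|]. rewrite sumR_cons.
  pose proof (H a (or_introl eq_refl)).
  pose proof (IH (fun i Hi => H i (or_intror Hi))). lra.
Qed.

Lemma sumR_ge_term l f m : (forall i, In i l -> 0 <= f i) -> In m l -> f m <= sumR l f.
Proof.
  induction l as [|a l IH]; intros H Hm; [destruct Hm|]. rewrite sumR_cons.
  pose proof (H a (or_introl eq_refl)).
  pose proof (sumR_nonneg l f (fun i Hi => H i (or_intror Hi))).
  destruct Hm as [<-|Hm]; [lra|].
  pose proof (IH (fun i Hi => H i (or_intror Hi)) Hm). lra.
Qed.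

Lemma sumR_sq_eq0 l f : sumR l (fun i => f i * f i) = 0 -> forall i, In i l -> f i = 0.
Proof.
  intros H i Hi.
  assert (f i * f i <= 0).
  { rewrite <- H. apply (sumR_ge_term l (fun i => f i * f i)); auto. intros; nra. }
  nra.
Qed.

Lemma idx_set_filter q p A : idx_set q A -> idx_set q (filter p A).
Proof.
  intros [HA Hq]. split; [apply NoDup_filter; auto|].
  intros j Hj; apply filter_In in Hj; apply Hq, Hj.
Qed.

Lemma setdiff_notIn j A B : In j (setdiff A B) -> ~ In j B.
Proof. intros Hj; apply filter_In, proj2, Bool.negb_true_iff, memb_notIn in Hj; exact Hj. Qed.

Lemma J0set_idx_set q ip f : idx_set q (J0set q ip f).
Proof.
  split; [apply NoDup_filter, seq_NoDup|].
  intros j Hj; apply filter_In, proj1, in_seq in Hj; lia.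
Qed.

Lemma subspace_sub (S : Fn -> Prop) g h :
  subspace S -> S g -> S h -> S (fun x => g x - h x).
Proof.
  intros [_ [Hadd Hscal]] Hg Hh.
  replace (fun x => g x - h x) with (fun x => g x + (fun x => -1 * h x) x)
    by (extensionality x; ring).
  apply Hadd; auto.
Qed.

Section SumSpaces.

Variable V : nat -> Fn -> Prop.

Lemma HJ_subspace A : (forall j, In j A -> subspace (V j)) -> subspace (HJ V A).
Proof.
  intros HV. split; [|split].
  - exists (fun _ _ => 0). split; [intros j Hj; apply (HV j Hj)|].
    intros x; unfold fsum; rewrite sumR_0; auto.
  - intros g h [gs [Hg Eg]] [hs [Hh Eh]].
    exists (fun j x => gs j x + hs j x). split; [intros j Hj; apply (HV j Hj); auto|].
    intros x; unfold fsum in *; rewrite sumR_plus, Eg, Eh; auto.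
  - intros a g [gs [Hg Eg]].
    exists (fun j x => a * gs j x). split; [intros j Hj; apply (HV j Hj); auto|].
    intros x; unfold fsum in *; rewrite sumR_scal, Eg; auto.
Qed.

Lemma HJ_mono (W : nat -> Fn -> Prop) A h :
  (forall j, In j A -> forall g, V j g -> W j g) -> HJ V A h -> HJ W A h.
Proof. intros HVW [hs [Hh E]]; exists hs; split; auto. Qed.

Lemma HJ_perm A B h : Permutation A B -> HJ V A h -> HJ V B h.
Proof.
  intros HAB [hs [Hh E]]. exists hs; split.
  - intros j Hj; apply Hh, (Permutation_in j (Permutation_sym HAB)), Hj.
  - intros x; rewrite E; apply sumR_perm, HAB.
Qed.

Lemma HJ_incl A B h : NoDup A -> NoDup B -> incl A B ->
  (forall j, In j B -> subspace (V j)) -> HJ V A h -> HJ V B h.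
Proof.
  intros HA HB HAB HV [hs [Hh E]].
  exists (fun j => if memb j A then hs j else fun _ => 0). split.
  - intros j Hj. destruct (memb j A) eqn:Em; [apply Hh, memb_In; auto|apply (HV j Hj)].
  - intros x. rewrite E. unfold fsum.
    rewrite (sumR_ext B _ (fun j => if memb j A then hs j x else 0))
      by (intros j _; destruct (memb j A); auto).
    rewrite <- sumR_swap by auto.
    apply sumR_ext; intros j Hj.
    rewrite (proj2 (memb_In j B)) by (apply HAB, Hj); reflexivity.
Qed.

(* An index lying in both [A] and [B] is counted twice in [A ++ B], hence the halving. *)
Lemma HJ_app_l A B g : NoDup A -> NoDup B ->
  (forall j, In j (A ++ B) -> subspace (V j)) -> HJ V A g -> HJ V (A ++ B) g.
Proof.
  intros HA HB HV [gs [Hg E]].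
  exists (fun j x => if memb j A then (if memb j B then / 2 * gs j x else gs j x) else 0).
  split.
  - intros j Hj. destruct (memb j A) eqn:EA.
    + apply memb_In in EA. destruct (memb j B); [|apply Hg; auto].
      apply (HV j Hj), Hg, EA.
    + apply (HV j Hj).
  - intros x. rewrite E. unfold fsum. rewrite sumR_app.
    rewrite (sumR_ext B _ (fun j => if memb j A then / 2 * gs j x else 0)).
    2:{ intros j Hj. rewrite (proj2 (memb_In j B) Hj). destruct (memb j A); reflexivity. }
    rewrite <- (sumR_swap A B (fun j => / 2 * gs j x)) by auto.
    rewrite (sumR_ext A (fun j => if memb j A then (if memb j B then / 2 * gs j x else gs j x) else 0)
               (fun j => if memb j B then / 2 * gs j x else gs j x))
      by (intros j Hj; rewrite (proj2 (memb_In j A) Hj); reflexivity).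
    rewrite <- sumR_plus. apply sumR_ext; intros j _. destruct (memb j B); field.
Qed.

Lemma HJ_app_r A B h : NoDup A -> NoDup B ->
  (forall j, In j (A ++ B) -> subspace (V j)) -> HJ V B h -> HJ V (A ++ B) h.
Proof.
  intros HA HB HV Hh. apply (HJ_perm (B ++ A)); [apply Permutation_app_comm|].
  apply HJ_app_l; auto.
  intros j Hj; apply HV, (Permutation_in j (Permutation_app_comm B A)), Hj.
Qed.

(* [v - g = w - u] with [w] the part of [v] outside [J] and [u := g - (part of v inside J)]. *)
Lemma HJ_residual J J0 vs g : NoDup J -> NoDup J0 ->
  (forall j, In j J -> subspace (V j)) -> (forall j, In j J0 -> V j (vs j)) -> HJ V J g ->
  exists u, HJ V J u /\
    forall x, fsum J0 vs x - g x = fsum (setdiff J0 J) vs x - u x.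
Proof.
  intros HJ HJ0 HV Hvs Hg.
  set (common := filter (fun j => memb j J) J0).
  exists (fun x => g x - fsum common vs x). split.
  - apply subspace_sub; [apply HJ_subspace; auto|auto|].
    apply (HJ_incl common); auto.
    + apply NoDup_filter; auto.
    + intros j Hj; apply filter_In in Hj; apply memb_In, Hj.
    + exists vs; split; [|reflexivity].
      intros j Hj; apply filter_In in Hj; apply Hvs, Hj.
  - intros x. unfold fsum at 1.
    rewrite (sumR_split_filter (fun j => memb j J)). unfold fsum, setdiff, common. ring.
Qed.

Lemma HJ_app_setdiff J J0 vs : NoDup J -> NoDup J0 ->
  (forall j, In j (J ++ J0) -> subspace (V j)) -> (forall j, In j J0 -> V j (vs j)) ->
  HJ V (J ++ J0) (fsum (setdiff J0 J) vs).
Proof.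
  intros HJ HJ0 HV Hvs. apply HJ_app_r; auto.
  apply (HJ_incl (setdiff J0 J)); try apply NoDup_filter; auto.
  - intros j Hj; apply filter_In in Hj; apply Hj.
  - intros j Hj; apply HV, in_or_app; right; exact Hj.
  - exists vs; split; [|reflexivity]. intros j Hj; apply filter_In in Hj; apply Hvs, Hj.
Qed.

End SumSpaces.

Definition dotn (n : nat) (a b : nat -> R) : R := sumR (seq 0 n) (fun i => a i * b i).

Definition vsub (S : (nat -> R) -> Prop) : Prop :=
  S (fun _ => 0) /\ (forall g h, S g -> S h -> S (fun i => g i + h i)) /\
  (forall a g, S g -> S (fun i => a * g i)).

Lemma vsub_lincomb S g h a : vsub S -> S g -> S h -> S (fun i => g i + a * h i).
Proof. intros [_ [Hadd Hscal]] Hg Hh. apply (Hadd g (fun i => a * h i)); auto. Qed.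

Lemma vsub_sub S g h : vsub S -> S g -> S h -> S (fun i => g i - h i).
Proof.
  intros HS Hg Hh. replace (fun i => g i - h i) with (fun i => g i + -1 * h i)
    by (extensionality x; ring). apply vsub_lincomb; auto.
Qed.

Lemma vsub_restrict S m : vsub S -> vsub (fun w => S w /\ w m = 0).
Proof.
  intros [H0 [Hadd Hscal]]. split; [|split].
  - split; auto.
  - intros g h [Hg Eg] [Hh Eh]; split; auto. rewrite Eg, Eh; ring.
  - intros a g [Hg Eg]; split; auto. rewrite Eg; ring.
Qed.

Lemma dotn_self_pos n r m : (m < n)%nat -> r m <> 0 -> 0 < dotn n r r.
Proof.
  intros Hm Hr.
  assert (r m * r m <= dotn n r r).
  { apply (sumR_ge_term _ (fun i => r i * r i)); [intros; nra|apply in_seq; lia]. }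
  assert (0 < r m * r m) by nra. lra.
Qed.

(* One Gram-Schmidt step: [S] is [S'] plus the direction [r], orthogonal to [S']. *)
Lemma orth_proj_extend n (S S' : (nat -> R) -> Prop) u r pu :
  vsub S -> (forall w, S' w -> S w) -> S r ->
  (forall w, S' w -> dotn n r w = 0) ->
  (forall w, S w -> exists t, S' (fun i => w i - t * r i)) ->
  0 < dotn n r r -> is_orth_proj n S' u pu ->
  is_orth_proj n S u (fun i => pu i + dotn n (fun i => u i - pu i) r / dotn n r r * r i).
Proof.
  intros HS HS'S Hr Hr_orth Hdecomp Hrr [Hpu Hpu_orth].
  set (c := dotn n (fun i => u i - pu i) r / dotn n r r).
  split; [apply vsub_lincomb; auto|].
  intros w Hw. destruct (Hdecomp w Hw) as [t Hw'].
  pose proof (Hpu_orth _ Hw') as E1. pose proof (Hr_orth _ Hw') as E2.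
  unfold dotn in *.
  rewrite (sumR_ext _ _ (fun i => ((u i - pu i) * (w i - t * r i) - c * (r i * (w i - t * r i)))
      + t * ((u i - pu i) * r i - c * (r i * r i)))) by (intros; ring).
  rewrite sumR_plus, sumR_minus, sumR_scal, sumR_scal, sumR_minus, sumR_scal, E1, E2.
  unfold c, dotn. field. lra.
Qed.

Lemma orth_proj_exists_vanishing n m : forall S, vsub S ->
  (forall w, S w -> forall i, (m <= i < n)%nat -> w i = 0) ->
  forall u, exists p, is_orth_proj n S u p.
Proof.
  induction m as [|m IHm]; intros S HS Hv u.
  - exists (fun _ => 0). split; [apply HS|]. intros w Hw.
    rewrite (sumR_ext _ _ (fun _ => 0)); [apply sumR_0|].
    intros i Hi; apply in_seq in Hi. rewrite (Hv w Hw i) by lia. ring.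
  - destruct (Compare_dec.le_lt_dec n m) as [Hnm|Hmn].
    { apply IHm; auto. intros w Hw i Hi; lia. }
    set (S' := fun w => S w /\ w m = 0).
    assert (HS' : vsub S') by apply vsub_restrict, HS.
    assert (Hv' : forall w, S' w -> forall i, (m <= i < n)%nat -> w i = 0).
    { intros w [Hw Hm] i Hi. destruct (Nat.eq_dec i m); [subst; auto|].
      apply (Hv w Hw); lia. }
    destruct (IHm S' HS' Hv' u) as [pu Hpu].
    destruct (classic (exists s, S s /\ s m <> 0)) as [[s [Hs Hsm]]|Hno].
    + destruct (IHm S' HS' Hv' s) as [ps [[Hps Hpsm] Hps_orth]].
      set (r := fun i => s i - ps i).
      assert (Hrm : r m <> 0) by (unfold r; rewrite Hpsm; lra).
      eexists; apply (orth_proj_extend n S S' u r pu); auto.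
      * intros w [Hw _]; exact Hw.
      * apply vsub_sub; auto.
      * intros w Hw; exists (w m / r m); split.
        -- apply (vsub_lincomb S w r (- (w m / r m))) in HS; [|auto|apply vsub_sub; auto].
           replace (fun i => w i - w m / r m * r i) with (fun i => w i + - (w m / r m) * r i)
             by (extensionality i; ring). exact HS.
        -- field; exact Hrm.
      * apply (dotn_self_pos n r m); auto.
    + exists pu. destruct Hpu as [[Hp _] Ho]. split; auto.
      intros w Hw. apply Ho. split; auto.
      apply NNPP; intro; apply Hno; exists w; auto.
Qed.

Lemma proj_spec n S u : vsub S -> is_orth_proj n S u (proj n S u).
Proof.
  intros HS. unfold proj. apply epsilon_spec.
  apply (orth_proj_exists_vanishing n n); auto. intros; lia.
Qed.

Lemma proj_id n S u : vsub S -> S u -> forall i, (i < n)%nat -> proj n S u i = u i.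
Proof.
  intros HS Hu i Hi. destruct (proj_spec n S u HS) as [Hp Horth].
  symmetry; apply Rminus_diag_uniq.
  apply (sumR_sq_eq0 (seq 0 n) (fun i => u i - proj n S u i)); [|apply in_seq; lia].
  apply Horth, vsub_sub; auto.
Qed.

Lemma emp_norm2_vec_ext n u u' :
  (forall i, (i < n)%nat -> u i = u' i) -> emp_norm2_vec n u = emp_norm2_vec n u'.
Proof.
  intros E. unfold emp_norm2_vec. f_equal. apply sumR_ext.
  intros i Hi; apply in_seq in Hi; rewrite E by lia; reflexivity.
Qed.

Lemma emp_norm2_vec_eval n xs u h :
  (forall i, (i < n)%nat -> u i = h (xs i)) -> emp_norm2_vec n u = emp_norm2_fn n xs h.
Proof. intros E. exact (emp_norm2_vec_ext n u (eval_vec xs h) E). Qed.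

Lemma orth_proj_pythagoras n S u p : is_orth_proj n S u p ->
  emp_norm2_vec n u = emp_norm2_vec n (fun i => u i - p i) + emp_norm2_vec n p.
Proof.
  intros [Hp Horth]. pose proof (Horth p Hp) as E.
  unfold emp_norm2_vec. rewrite <- Rmult_plus_distr_l. f_equal.
  transitivity (sumR (seq 0 n) (fun i => (u i - p i) ^ 2) + sumR (seq 0 n) (fun i => p i ^ 2)
    + 2 * sumR (seq 0 n) (fun i => (u i - p i) * p i)); [|rewrite E; ring].
  rewrite <- sumR_scal, <- !sumR_plus. apply sumR_ext; intros; ring.
Qed.

Lemma proj_norm2_gap n S0 S u : vsub S0 -> vsub S -> S0 u ->
  emp_norm2_vec n (proj n S0 u) - emp_norm2_vec n (proj n S u)
  = emp_norm2_vec n (fun i => u i - proj n S u i).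
Proof.
  intros HS0 HS Hu. rewrite (emp_norm2_vec_ext n _ u) by (apply proj_id; auto).
  rewrite (orth_proj_pythagoras n S u _ (proj_spec n S u HS)). ring.
Qed.

Lemma SJ_vsub n xs V J : (forall j, In j J -> subspace (V j)) -> vsub (SJ n xs V J).
Proof.
  intros HV. destruct (HJ_subspace V J HV) as [H0 [Hadd Hscal]]. split; [|split].
  - exists (fun _ => 0); split; auto.
  - intros w1 w2 [g1 [Hg1 E1]] [g2 [Hg2 E2]]. exists (fun x => g1 x + g2 x); split; auto.
    intros i Hi; rewrite E1, E2; auto.
  - intros a w1 [g1 [Hg1 E1]]. exists (fun x => a * g1 x); split; auto.
    intros i Hi; rewrite E1; auto.
Qed.

Section InnerProduct.

Variables (D : Fn -> Prop) (ip : Fn -> Fn -> R).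
Hypotheses (HD : subspace D) (Hip : inner_on D ip).

Lemma ip_lincomb_expand g h a : D g -> D h ->
  ip (fun x => g x + a * h x) (fun x => g x + a * h x)
  = ip g g + 2 * a * ip g h + a ^ 2 * ip h h.
Proof.
  destruct HD as [_ [Hadd_D Hscal_D]]. destruct Hip as [Hsym [Hadd [Hscal _]]].
  intros Dg Dh.
  assert (Dah : D (fun x => a * h x)) by auto.
  assert (Dk : D (fun x => g x + a * h x)) by (apply (Hadd_D g (fun x => a * h x)); auto).
  rewrite (Hadd g (fun x => a * h x)) by auto. rewrite Hscal by auto.
  rewrite (Hsym g _ Dg Dk), (Hsym h _ Dh Dk).
  rewrite (Hadd g (fun x => a * h x) g), (Hadd g (fun x => a * h x) h) by auto.
  rewrite !Hscal by auto. rewrite (Hsym h g Dh Dg). ring.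
Qed.

Lemma ip_sub_expand g h : D g -> D h ->
  ip (fun x => g x - h x) (fun x => g x - h x) = ip g g - 2 * ip g h + ip h h.
Proof.
  intros Dg Dh. replace (fun x => g x - h x) with (fun x => g x + -1 * h x)
    by (extensionality x; ring).
  rewrite ip_lincomb_expand by auto. ring.
Qed.

(* If [ip g h <> 0], then [ip (g + t h) (g + t h) < 0] for [t] of the right sign. *)
Lemma ip_eq0_of_norm_eq0 g h : D g -> D h -> ip h h = 0 -> ip g h = 0.
Proof.
  intros Dg Dh Hhh. apply NNPP; intros Hc.
  set (t := - (ip g g + 1) / (2 * ip g h)).
  assert (Dk : D (fun x => g x + t * h x))
    by (destruct HD as [_ [Hadd Hscal]]; apply (Hadd g (fun x => t * h x)); auto).
  pose proof (proj2 (proj2 (proj2 Hip)) _ Dk) as P.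
  rewrite ip_lincomb_expand, Hhh in P by auto.
  assert (2 * t * ip g h = - (ip g g + 1)) by (unfold t; field; auto).
  lra.
Qed.

End InnerProduct.

Lemma sub_norm2_ge_corr a b c rho : 0 <= a -> 0 <= b ->
  c <= rho * sqrt a * sqrt b -> (1 - rho ^ 2) * a <= a - 2 * c + b.
Proof.
  intros Ha Hb Hc.
  rewrite <- (sqrt_sqrt a Ha), <- (sqrt_sqrt b Hb).
  pose proof (pow2_ge_0 (sqrt b - rho * sqrt a)). nra.
Qed.

Section Correlation.

Variables (q qstar : nat) (H : nat -> Fn -> Prop) (ip : Fn -> Fn -> R) (rho : R).
Hypotheses (HH : forall j, (j < q)%nat -> subspace (H j))
  (Hip : inner_on (HJ H (seq 0 q)) ip) (Hlub : is_lub (corr_set q qstar H ip) rho).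

Lemma HJ_full_subspace : subspace (HJ H (seq 0 q)).
Proof. apply HJ_subspace; intros j Hj; apply HH; apply in_seq in Hj; lia. Qed.

Lemma HJ_full A h : idx_set q A -> HJ H A h -> HJ H (seq 0 q) h.
Proof.
  intros [HA HAq]. apply HJ_incl; auto; [apply seq_NoDup| |].
  - intros j Hj; apply in_seq; specialize (HAq j Hj); lia.
  - intros j Hj; apply HH; apply in_seq in Hj; lia.
Qed.

Lemma corr_set_opp r : corr_set q qstar H ip r -> corr_set q qstar H ip (- r).
Proof.
  intros (J1 & J2 & h1 & h2 & I1 & I2 & Dis & L1 & L2 & Hh1 & Hh2 & P1 & P2 & Er).
  destruct Hip as [Hsym [_ [Hscal _]]].
  pose proof (HJ_full J1 h1 I1 Hh1) as D1. pose proof (HJ_full J2 h2 I2 Hh2) as D2.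
  assert (D2' : HJ H (seq 0 q) (fun x => -1 * h2 x)) by (apply HJ_full_subspace; auto).
  assert (Hnorm : ip (fun x => -1 * h2 x) (fun x => -1 * h2 x) = ip h2 h2).
  { rewrite Hscal, Hsym, Hscal by auto. ring. }
  exists J1, J2, h1, (fun x => -1 * h2 x).
  refine (conj I1 (conj I2 (conj Dis (conj L1 (conj L2 (conj Hh1 (conj _ (conj P1 (conj _ _))))))))).
  - destruct I2 as [_ HJ2]. apply HJ_subspace; auto.
  - rewrite Hnorm; auto.
  - rewrite Hnorm, Hsym, Hscal, Hsym, Er by auto. unfold Rdiv; ring.
Qed.

(* [corr_set] is symmetric under negation, and nonempty because it has a least upper bound. *)
Lemma rho_nonneg : 0 <= rho.
Proof.
  destruct (classic (exists r, corr_set q qstar H ip r)) as [[r Hr]|Hno].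
  - pose proof (proj1 Hlub r Hr). pose proof (proj1 Hlub (- r) (corr_set_opp r Hr)). lra.
  - assert (rho <= rho - 1); [|lra].
    apply (proj2 Hlub). intros x Hx. exfalso; apply Hno; eauto.
Qed.

Lemma ip_le_rho J1 J2 h1 h2 :
  idx_set q J1 -> idx_set q J2 -> (forall j, In j J1 -> ~ In j J2) ->
  (length J1 <= qstar)%nat -> (length J2 <= qstar)%nat -> HJ H J1 h1 -> HJ H J2 h2 ->
  ip h1 h2 <= rho * sqrt (ip h1 h1) * sqrt (ip h2 h2).
Proof.
  intros I1 I2 Dis L1 L2 Hh1 Hh2.
  pose proof (HJ_full J1 h1 I1 Hh1) as D1. pose proof (HJ_full J2 h2 I2 Hh2) as D2.
  pose proof (proj2 (proj2 (proj2 Hip)) h1 D1) as N1.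
  pose proof (proj2 (proj2 (proj2 Hip)) h2 D2) as N2.
  destruct (Req_dec (ip h2 h2) 0) as [Z2|Z2].
  { rewrite (ip_eq0_of_norm_eq0 _ ip HJ_full_subspace Hip h1 h2), Z2, sqrt_0 by auto. lra. }
  destruct (Req_dec (ip h1 h1) 0) as [Z1|Z1].
  { rewrite (proj1 Hip h1 h2), (ip_eq0_of_norm_eq0 _ ip HJ_full_subspace Hip h2 h1), Z1, sqrt_0
      by auto. lra. }
  assert (Hr : corr_set q qstar H ip (ip h1 h2 / (sqrt (ip h1 h1) * sqrt (ip h2 h2)))).
  { exists J1, J2, h1, h2.
    refine (conj I1 (conj I2 (conj Dis (conj L1 (conj L2 (conj Hh1 (conj Hh2 _))))))).
    repeat split; lra. }
  pose proof (proj1 Hlub _ Hr) as Hle.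
  assert (0 < sqrt (ip h1 h1) * sqrt (ip h2 h2))
    by (apply Rmult_lt_0_compat; apply sqrt_lt_R0; lra).
  apply Rmult_le_compat_r with (r := sqrt (ip h1 h1) * sqrt (ip h2 h2)) in Hle; [|lra].
  unfold Rdiv in Hle. rewrite Rmult_assoc, Rinv_l in Hle by lra. lra.
Qed.

Lemma ip_sub_ge_corr J1 J2 w u :
  idx_set q J1 -> idx_set q J2 -> (forall j, In j J1 -> ~ In j J2) ->
  (length J1 <= qstar)%nat -> (length J2 <= qstar)%nat -> HJ H J1 w -> HJ H J2 u ->
  (1 - rho ^ 2) * ip w w <= ip (fun x => w x - u x) (fun x => w x - u x).
Proof.
  intros I1 I2 Dis L1 L2 Hw Hu.
  pose proof (HJ_full J1 w I1 Hw) as Dw. pose proof (HJ_full J2 u I2 Hu) as Du.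
  rewrite (ip_sub_expand _ ip HJ_full_subspace Hip) by auto.
  apply sub_norm2_ge_corr; try apply (proj2 (proj2 (proj2 Hip))); auto.
  apply (ip_le_rho J1 J2); auto.
Qed.

End Correlation.

Lemma norm_ratio_bound delta k a b x y :
  0 < delta < 1 -> 0 <= k -> k * a <= b ->
  y <= (1 + delta) * a -> (1 - delta) * b <= x ->
  x >= (1 - delta) / (1 + delta) * k * y.
Proof.
  intros Hd Hk Hab Hy Hx.
  assert (Hy' : (1 - delta) / (1 + delta) * k * y <= (1 - delta) / (1 + delta) * k * ((1 + delta) * a)).
  { apply Rmult_le_compat_l; auto. apply Rmult_le_pos; auto.
    apply Rmult_le_pos; [lra|left; apply Rinv_0_lt_compat; lra]. }
  replace ((1 - delta) / (1 + delta) * k * ((1 + delta) * a)) with ((1 - delta) * (k * a))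
    in Hy' by (field; lra).
  nra.
Qed.

Theorem proposition5 (q qstar n : nat) (H V : nat -> Fn -> Prop)
  (ip : Fn -> Fn -> R) (f : nat -> Fn) (rho delta : R) (xs : nat -> Pt)
  (J : list nat) (vs : nat -> Fn) :
  (forall j, (j < q)%nat -> subspace (H j)) ->
  inner_on (HJ H (seq 0 q)) ip ->
  (forall j, (j < q)%nat -> H j (f j)) ->
  (length (J0set q ip f) <= qstar)%nat ->
  is_lub (corr_set q qstar H ip) rho ->
  rho < 1 ->
  (forall j, (j < q)%nat ->
     subspace (V j) /\ fin_dim (V j) /\ (forall g, V j g -> H j g)) ->
  (0 < n)%nat ->
  0 < delta < 1 ->
  idx_set q J -> (length J <= qstar)%nat ->
  setdiff (J0set q ip f) J <> nil ->
  (forall j, In j (J0set q ip f) -> V j (vs j)) ->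
  event n xs ip V (J ++ J0set q ip f) delta ->
  let v := fsum (J0set q ip f) vs in
  let e := eval_vec xs v in
  emp_norm2_vec n (PiHat n xs V (J0set q ip f) e)
    - emp_norm2_vec n (PiHat n xs V J e)
    = emp_norm2_vec n (fun i => e i - PiHat n xs V J e i)
  /\ emp_norm2_vec n (fun i => e i - PiHat n xs V J e i)
     >= (1 - delta) / (1 + delta) * (1 - rho ^ 2)
        * emp_norm2_fn n xs (fsum (setdiff (J0set q ip f) J) vs).
Proof.
  intros HH Hip _ HJ0len Hlub Hrho HV _ Hdelta HJi HJlen _ Hvs Hev v e.
  set (J0 := J0set q ip f) in *.
  pose proof (J0set_idx_set q ip f) as HJ0i. fold J0 in HJ0i.
  pose proof (idx_set_filter q (fun j => negb (memb j J)) J0 HJ0i) as HDi.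
  assert (HVsub : forall A, idx_set q A -> forall j, In j A -> subspace (V j))
    by (intros A [_ HA] j Hj; apply HV, HA, Hj).
  assert (HVJJ0 : forall j, In j (J ++ J0) -> subspace (V j))
    by (intros j Hj; apply in_app_or in Hj; destruct Hj; [apply (HVsub J)|apply (HVsub J0)]; auto).
  pose proof (proj_spec n _ e (SJ_vsub n xs V J (HVsub J HJi))) as HQ.
  split.
  - apply proj_norm2_gap; [apply SJ_vsub, HVsub, HJ0i|apply SJ_vsub, HVsub, HJi|].
    exists v; split; [exists vs; split; auto|reflexivity].
  - destruct HQ as [[g [Hg EQ]] _]. set (w := fsum (setdiff J0 J) vs).
    destruct (HJ_residual V J J0 vs g (proj1 HJi) (proj1 HJ0i) (HVsub J HJi) Hvs Hg)
      as [u [Hu Eres]].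
    pose proof (HJ_app_setdiff V J J0 vs (proj1 HJi) (proj1 HJ0i) HVJJ0 Hvs) as HwJJ0.
    assert (HresJJ0 : HJ V (J ++ J0) (fun x => w x - u x)).
    { apply subspace_sub; auto; [apply HJ_subspace; auto|].
      apply HJ_app_l; try apply HJi; try apply HJ0i; auto. }
    assert (HVH : forall A, idx_set q A -> forall j, In j A -> forall g, V j g -> H j g)
      by (intros A [_ HA] j Hj; apply HV, HA, Hj).
    rewrite (emp_norm2_vec_eval n xs _ (fun x => w x - u x))
      by (intros i Hi; unfold PiHat; rewrite EQ, <- Eres by exact Hi; reflexivity).
    apply (norm_ratio_bound delta _ (ip w w) (ip (fun x => w x - u x) (fun x => w x - u x))).
    + exact Hdelta.
    + pose proof (rho_nonneg q qstar H ip rho HH Hip Hlub). nra.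
    + apply (ip_sub_ge_corr q qstar H ip rho HH Hip Hlub (setdiff J0 J) J); auto.
      * intros j Hj; apply (setdiff_notIn j J0 J), Hj.
      * eapply Nat.le_trans; [apply filter_length_le|exact HJ0len].
      * apply (HJ_mono V); [apply HVH, HDi|exists vs; split; [|reflexivity]].
        intros j Hj; apply filter_In in Hj; apply Hvs, Hj.
      * apply (HJ_mono V); [apply HVH, HJi|exact Hu].
    + apply (Hev w HwJJ0).
    + apply (Hev _ HresJJ0).
Qed.
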